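(* Let $h\in\mathbb N$ and $P\in\mathcal C(h)$ be such that every hole is an axis-aligned rectangle. Then for every $s\in P$ there is a path in $P$ from $s$ to a point of $\partial P_0$ of length at most ${\rm diam}_2(P)$.
   Context: $\mathcal C(h)$ is the family of polygonal domains $P=P_0\setminus\bigcup_{i=1}^h\operatorname{int}(P_i)$ with $P_0$ a convex polygon and $P_1,\dots,P_h$ pairwise disjoint convex polygons (holes) in the interior of $P_0$; ${\rm diam}_2(P)=\sup_{s,t\in P}|st|$. *)

From Stdlib Require Import Reals Lra List.
Open Scope R_scope.

Definition point := (R * R)%type.

Definition dist (p q : point) : R :=
  sqrt ((fst p - fst q)^2 + (snd p - snd q)^2).

Definition pinterior (A : point -> Prop) (p : point) : Prop :=
  exists eps, 0 < eps /\ forall q, dist p q < eps -> A q.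

Definition pclosure (A : point -> Prop) (p : point) : Prop :=
  forall eps, 0 < eps -> exists q, A q /\ dist p q < eps.

Definition pboundary (A : point -> Prop) (p : point) : Prop :=
  pclosure A p /\ ~ pinterior A p.

Fixpoint wsum (wl : list (R * point)) : point :=
  match wl with
  | nil => (0, 0)
  | (w, q) :: r => let s := wsum r in (w * fst q + fst s, w * snd q + snd s)
  end.

Fixpoint wtot (wl : list (R * point)) : R :=
  match wl with
  | nil => 0
  | (w, _) :: r => w + wtot r
  end.

Definition in_hull (l : list point) (p : point) : Prop :=
  exists wl : list (R * point),
    (forall w q, In (w, q) wl -> 0 <= w /\ In q l) /\
    wtot wl = 1 /\ p = wsum wl.

(* a convex polygon: convex hull of finitely many points, with nonempty
   pinterior (a genuine 2-dimensional polygon) *)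
Definition convex_polygon (A : point -> Prop) : Prop :=
  (exists l : list point, forall p, A p <-> in_hull l p) /\
  (exists p, pinterior A p).

Definition rect (r : R * R * R * R) (p : point) : Prop :=
  let '(a, b, c, d) := r in
  a <= fst p <= b /\ c <= snd p <= d.

Definition nondeg_rect (r : R * R * R * R) : Prop :=
  let '(a, b, c, d) := r in a < b /\ c < d.

Definition domain (P0 : point -> Prop) (h : nat) (H : nat -> R * R * R * R)
  (p : point) : Prop :=
  P0 p /\ forall i, (i < h)%nat -> ~ pinterior (rect (H i)) p.

Definition diam2 (A : point -> Prop) (d : R) : Prop :=
  is_lub (fun r => exists s t, A s /\ A t /\ r = dist s t) d.

Definition curve_continuous (g : R -> point) : Prop :=
  forall t, 0 <= t <= 1 -> forall eps, 0 < eps ->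
    exists delta, 0 < delta /\
      forall u, 0 <= u <= 1 -> Rabs (u - t) < delta -> dist (g u) (g t) < eps.

Fixpoint poly_len (g : R -> point) (t0 : R) (ts : list R) : R :=
  match ts with
  | nil => 0
  | t :: r => dist (g t0) (g t) + poly_len g t r
  end.

(* the length of g on [0,1] (the supremum over partitions) is at most L *)
Definition length_le (g : R -> point) (L : R) : Prop :=
  forall ts : list R,
    (forall t, In t ts -> 0 <= t <= 1) ->
    (forall (i : nat), (S i < length ts)%nat -> nth i ts 0 <= nth (S i) ts 0) ->
    poly_len g 0 ts <= L.

Definition path_in (A : point -> Prop) (g : R -> point) (s t : point) : Prop :=
  curve_continuous g /\ g 0 = s /\ g 1 = t /\
  forall u, 0 <= u <= 1 -> A (g u).

(** From any [s] in [P] we build a "staircase" -- a curve in [P] along which both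
   coordinates are nondecreasing -- ending on the boundary of [P0]: move right
   until leaving [P0]; if a hole is met first, climb its left side and follow
   its top side, after which that hole lies to the left of the current point, so
   this happens at most [h] times.  A staircase has length equal to its
   l1-displacement.  Reflecting the whole picture through the origin gives a
   down-left staircase from [s] to another boundary point.  The two staircases
   have total length the l1-distance between their endpoints [t1] and [t2],
   which is at most [2 |t1 t2| <= 2 diam_2(P)], so one of them is short enough. *)

From Stdlib Require Import Reals Lra Lia List Wf_nat Classical IndefiniteDescription.
Open Scope R_scope.

Lemma dist_nonneg p q : 0 <= dist p q.
Proof. apply sqrt_pos. Qed.

Lemma dist_comm p q : dist p q = dist q p.
Proof. unfold dist; f_equal; ring. Qed.

Lemma dist_self p : dist p p = 0.
Proof.
  unfold dist. replace ((fst p - fst p) ^ 2 + (snd p - snd p) ^ 2) with 0 by ring.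
  apply sqrt_0.
Qed.

Lemma dist_eq_0 p q : dist p q = 0 -> p = q.
Proof.
  destruct p as [x y], q as [x' y']; unfold dist; cbn [fst snd]; intro E.
  assert (Hx := pow2_ge_0 (x - x')); assert (Hy := pow2_ge_0 (y - y')).
  apply sqrt_eq_0 in E; [|lra].
  assert (x - x' = 0) by nra; assert (y - y' = 0) by nra.
  f_equal; lra.
Qed.

Lemma abs_fst_le_dist p q : Rabs (fst p - fst q) <= dist p q.
Proof.
  unfold dist. rewrite <- (sqrt_pow2 (Rabs (fst p - fst q))) by apply Rabs_pos.
  apply sqrt_le_1_alt. rewrite pow2_abs. generalize (pow2_ge_0 (snd p - snd q)); lra.
Qed.

Lemma abs_snd_le_dist p q : Rabs (snd p - snd q) <= dist p q.
Proof.
  unfold dist. rewrite <- (sqrt_pow2 (Rabs (snd p - snd q))) by apply Rabs_pos.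
  apply sqrt_le_1_alt. rewrite pow2_abs. generalize (pow2_ge_0 (fst p - fst q)); lra.
Qed.

Lemma l1_le_twice_dist p q :
  Rabs (fst p - fst q) + Rabs (snd p - snd q) <= 2 * dist p q.
Proof. generalize (abs_fst_le_dist p q) (abs_snd_le_dist p q); lra. Qed.

Lemma dist_le_l1 p q : dist p q <= Rabs (fst p - fst q) + Rabs (snd p - snd q).
Proof.
  assert (Hx := Rabs_pos (fst p - fst q)); assert (Hy := Rabs_pos (snd p - snd q)).
  unfold dist. rewrite <- (sqrt_pow2 (Rabs (fst p - fst q) + Rabs (snd p - snd q))) by lra.
  apply sqrt_le_1_alt.
  rewrite <- (pow2_abs (fst p - fst q)), <- (pow2_abs (snd p - snd q)). nra.
Qed.

Lemma dist_horizontal x1 x2 y : dist (x1, y) (x2, y) = Rabs (x1 - x2).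
Proof.
  unfold dist; cbn [fst snd].
  replace ((x1 - x2) ^ 2 + (y - y) ^ 2) with (Rabs (x1 - x2) ^ 2) by (rewrite pow2_abs; ring).
  apply sqrt_pow2, Rabs_pos.
Qed.

Lemma dist_vertical x y1 y2 : dist (x, y1) (x, y2) = Rabs (y1 - y2).
Proof.
  unfold dist; cbn [fst snd].
  replace ((x - x) ^ 2 + (y1 - y2) ^ 2) with (Rabs (y1 - y2) ^ 2) by (rewrite pow2_abs; ring).
  apply sqrt_pow2, Rabs_pos.
Qed.

Lemma dist_triangle p q r : dist p r <= dist p q + dist q r.
Proof.
  unfold dist.
  set (a1 := fst p - fst q); set (a2 := snd p - snd q);
  set (b1 := fst q - fst r); set (b2 := snd q - snd r).
  replace (fst p - fst r) with (a1 + b1) by (unfold a1, b1; ring).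
  replace (snd p - snd r) with (a2 + b2) by (unfold a2, b2; ring).
  assert (HA : 0 <= a1 ^ 2 + a2 ^ 2) by nra.
  assert (HB : 0 <= b1 ^ 2 + b2 ^ 2) by nra.
  (* Cauchy-Schwarz in the plane *)
  assert (Hcs : a1 * b1 + a2 * b2 <= sqrt (a1 ^ 2 + a2 ^ 2) * sqrt (b1 ^ 2 + b2 ^ 2)).
  { rewrite <- sqrt_mult by auto.
    apply Rle_trans with (Rabs (a1 * b1 + a2 * b2)); [apply Rle_abs|].
    rewrite <- (sqrt_pow2 (Rabs (a1 * b1 + a2 * b2))) by apply Rabs_pos.
    apply sqrt_le_1_alt. rewrite pow2_abs.
    assert (0 <= (a1 * b2 - a2 * b1) ^ 2) by apply pow2_ge_0. nra. }
  assert (Ha := sqrt_pos (a1 ^ 2 + a2 ^ 2)); assert (Hb := sqrt_pos (b1 ^ 2 + b2 ^ 2)).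
  rewrite <- (sqrt_pow2 (sqrt (a1 ^ 2 + a2 ^ 2) + sqrt (b1 ^ 2 + b2 ^ 2))) by lra.
  apply sqrt_le_1_alt.
  assert (E1 := sqrt_sqrt _ HA); assert (E2 := sqrt_sqrt _ HB).
  nra.
Qed.

Definition convex_comb (a b : point) (l : R) : point :=
  (fst a + l * (fst b - fst a), snd a + l * (snd b - snd a)).

Definition is_convex (A : point -> Prop) : Prop :=
  forall a b l, A a -> A b -> 0 <= l <= 1 -> A (convex_comb a b l).

Definition is_closed (A : point -> Prop) : Prop := forall p, pclosure A p -> A p.

Definition is_bounded (A : point -> Prop) : Prop :=
  exists B, forall p, A p -> Rabs (fst p) <= B /\ Rabs (snd p) <= B.

Lemma convex_comb_0 a b : convex_comb a b 0 = a.
Proof. destruct a; unfold convex_comb; simpl; f_equal; ring. Qed.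

Lemma convex_comb_1 a b : convex_comb a b 1 = b.
Proof. destruct a, b; unfold convex_comb; simpl; f_equal; ring. Qed.

Lemma dist_convex_comb a b u v :
  dist (convex_comb a b u) (convex_comb a b v) = Rabs (u - v) * dist a b.
Proof.
  unfold dist, convex_comb; cbn [fst snd].
  replace ((fst a + u * (fst b - fst a) - (fst a + v * (fst b - fst a))) ^ 2 +
           (snd a + u * (snd b - snd a) - (snd a + v * (snd b - snd a))) ^ 2)
    with (Rabs (u - v) ^ 2 * ((fst a - fst b) ^ 2 + (snd a - snd b) ^ 2))
    by (rewrite pow2_abs; ring).
  rewrite sqrt_mult_alt by apply pow2_ge_0. rewrite sqrt_pow2 by apply Rabs_pos. auto.
Qed.

Definition scale (c : R) (wl : list (R * point)) : list (R * point) :=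
  map (fun wq => (c * fst wq, snd wq)) wl.

Lemma wsum_app a b :
  wsum (a ++ b) = (fst (wsum a) + fst (wsum b), snd (wsum a) + snd (wsum b)).
Proof.
  induction a as [|[w q] r IH]; simpl.
  - destruct (wsum b); simpl; f_equal; ring.
  - rewrite IH; simpl; f_equal; ring.
Qed.

Lemma wtot_app a b : wtot (a ++ b) = wtot a + wtot b.
Proof. induction a as [|[w q] r IH]; simpl; [ring | rewrite IH; ring]. Qed.

Lemma wsum_scale c a : wsum (scale c a) = (c * fst (wsum a), c * snd (wsum a)).
Proof. induction a as [|[w q] r IH]; simpl; [|rewrite IH; simpl]; f_equal; ring. Qed.

Lemma wtot_scale c a : wtot (scale c a) = c * wtot a.
Proof. induction a as [|[w q] r IH]; simpl; [ring | rewrite IH; ring]. Qed.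

Lemma in_scale c a w q : In (w, q) (scale c a) -> exists w', w = c * w' /\ In (w', q) a.
Proof.
  unfold scale; intro Hin. apply in_map_iff in Hin as [[w' q'] [E Hi]].
  inversion E; subst; eauto.
Qed.

Lemma wtot_nonneg wl : (forall w q, In (w, q) wl -> 0 <= w) -> 0 <= wtot wl.
Proof.
  induction wl as [|[w q] r IH]; simpl; intros Hw; [lra|].
  assert (Hw0 := Hw w q (or_introl eq_refl)).
  assert (0 <= wtot r) by (apply IH; eauto). lra.
Qed.

Lemma wsum_null wl :
  (forall w q, In (w, q) wl -> 0 <= w) -> wtot wl = 0 -> wsum wl = (0, 0).
Proof.
  induction wl as [|[w q] r IH]; simpl; intros Hw Ht; [auto|].
  assert (Hw0 := Hw w q (or_introl eq_refl)).
  assert (0 <= wtot r) by (apply wtot_nonneg; eauto).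
  assert (w = 0) by lra. rewrite IH; eauto; [|lra]. subst; simpl; f_equal; ring.
Qed.

(* Gather all the weight sitting on the point [q]. *)
Lemma weights_split q l wl :
  (forall w p, In (w, p) wl -> 0 <= w /\ In p (q :: l)) ->
  exists a wl', 0 <= a /\ (forall w p, In (w, p) wl' -> 0 <= w /\ In p l) /\
    wtot wl = a + wtot wl' /\
    wsum wl = (a * fst q + fst (wsum wl'), a * snd q + snd (wsum wl')).
Proof.
  induction wl as [|[w p] r IH]; simpl; intros Hw.
  - exists 0, nil. simpl. repeat split; try lra; try tauto; f_equal; ring.
  - destruct IH as [a [wl' [Ha [H1 [H2 H3]]]]]; [intros; apply Hw; auto|].
    destruct (Hw w p (or_introl eq_refl)) as [Hw0 [<-|Hin]].
    + exists (w + a), wl'. split; [lra|split; [auto|split]].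
      * rewrite H2; ring.
      * rewrite H3; simpl; f_equal; ring.
    + exists a, ((w, p) :: wl'). split; [auto|split; [|split]].
      * simpl; intros w0 p0 [E|E]; [inversion E; subst; auto|auto].
      * simpl; rewrite H2; ring.
      * rewrite H3; simpl; f_equal; ring.
Qed.

Lemma hull_nil p : ~ in_hull nil p.
Proof.
  intros [wl [H1 [H2 _]]]. destruct wl as [|[w q] r].
  - simpl in H2; lra.
  - destruct (H1 w q (or_introl eq_refl)) as [_ []].
Qed.

Lemma hull_cons q l p : in_hull (q :: l) p <->
  p = q \/ exists t r, 0 < t <= 1 /\ in_hull l r /\ p = convex_comb q r t.
Proof.
  split.
  - intros [wl [H1 [H2 H3]]].
    destruct (weights_split q l wl H1) as [a [wl' [Ha [G1 [G2 G3]]]]].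
    assert (Hb : 0 <= wtot wl') by (apply wtot_nonneg; intros; eapply G1; eauto).
    destruct (Req_dec (wtot wl') 0) as [E|E].
    + left. rewrite (wsum_null wl') in G3; [|intros; eapply G1; eauto|auto].
      assert (a = 1) by lra. subst a p. rewrite G3. destruct q; simpl; f_equal; ring.
    + right. set (b := wtot wl').
      exists b, (/ b * fst (wsum wl'), / b * snd (wsum wl')).
      split; [unfold b; lra|split].
      * exists (scale (/ b) wl'). split; [|split].
        -- intros w0 p0 Hi. apply in_scale in Hi as [w' [-> Hi]]. destruct (G1 _ _ Hi).
           split; auto. apply Rmult_le_pos; auto.
           left; apply Rinv_0_lt_compat; unfold b; lra.
        -- rewrite wtot_scale. fold b. field. auto.
        -- rewrite wsum_scale; auto.
      * assert (Ea : a = 1 - b) by (unfold b; lra).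
        rewrite H3, G3, Ea. unfold convex_comb; simpl. f_equal; field; auto.
  - intros [->|[t [r [Ht [[wr [R1 [R2 R3]]] ->]]]]].
    + exists ((1, q) :: nil). split; [|split].
      * simpl; intros w p0 [E|[]]; inversion E; subst; split; [lra|left; auto].
      * simpl; ring.
      * destruct q; simpl; f_equal; ring.
    + exists ((1 - t, q) :: scale t wr). split; [|split].
      * simpl; intros w p0 [E|Hi].
        -- inversion E; subst; split; [lra|left; auto].
        -- apply in_scale in Hi as [w' [-> Hi]].
           destruct (R1 _ _ Hi); split; [nra|right; auto].
      * simpl; rewrite wtot_scale, R2; ring.
      * simpl; rewrite wsum_scale; subst; unfold convex_comb; simpl; f_equal; ring.
Qed.

Lemma hull_convex l : is_convex (in_hull l).
Proof.
  intros a b t [wa [Ha1 [Ha2 Ha3]]] [wb [Hb1 [Hb2 Hb3]]] Ht.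
  exists (scale (1 - t) wa ++ scale t wb). split; [|split].
  - intros w q Hin.
    apply in_app_or in Hin as [Hin|Hin]; apply in_scale in Hin as [w' [-> Hi]].
    + destruct (Ha1 _ _ Hi); split; auto; nra.
    + destruct (Hb1 _ _ Hi); split; auto; nra.
  - rewrite wtot_app, !wtot_scale, Ha2, Hb2; ring.
  - rewrite wsum_app, !wsum_scale; subst; unfold convex_comb; simpl; f_equal; ring.
Qed.

Lemma hull_bounded l : is_bounded (in_hull l).
Proof.
  induction l as [|q l [B HB]].
  - exists 0. intros p Hp; destruct (hull_nil p Hp).
  - exists (Rmax B (Rmax (Rabs (fst q)) (Rabs (snd q)))).
    intros p Hp. apply hull_cons in Hp as [->|[t [r [Ht [Hr ->]]]]].
    + split; eapply Rle_trans; [| apply Rmax_r | | apply Rmax_r];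
        [apply Rmax_l | apply Rmax_r].
    + destruct (HB r Hr) as [Bx By]. unfold convex_comb; simpl.
      set (M := Rmax B (Rmax (Rabs (fst q)) (Rabs (snd q)))).
      assert (Hqx : Rabs (fst q) <= M).
      { unfold M; eapply Rle_trans; [apply Rmax_l|apply Rmax_r]. }
      assert (Hqy : Rabs (snd q) <= M).
      { unfold M; eapply Rle_trans; [apply Rmax_r|apply Rmax_r]. }
      assert (HBM : B <= M) by apply Rmax_l.
      assert (Hcomb : forall u v, Rabs u <= M -> Rabs v <= M -> Rabs (u + t * (v - u)) <= M).
      { intros u v Hu Hv. replace (u + t * (v - u)) with ((1 - t) * u + t * v) by ring.
        eapply Rle_trans; [apply Rabs_triang|].
        rewrite !Rabs_mult, (Rabs_right t), (Rabs_right (1 - t)) by lra. nra. }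
      split; apply Hcomb; lra.
Qed.

Lemma seq_choice (A : Type) (P : nat -> A -> Prop) :
  (forall n, exists x, P n x) -> exists f, forall n, P n (f n).
Proof.
  intro H. exists (fun n => proj1_sig (constructive_indefinite_description _ (H n))).
  intro n. apply proj2_sig.
Qed.

Lemma cluster_value (u : nat -> R) a b : (forall n, a <= u n <= b) ->
  exists L, a <= L <= b /\
    forall eta N, 0 < eta -> exists n, (N <= n)%nat /\ Rabs (u n - L) < eta.
Proof.
  intro Hu.
  destruct (Bolzano_Weierstrass u (fun c => a <= c <= b) (compact_P3 a b) Hu) as [L HL].
  assert (Hnear : forall eta N, 0 < eta -> exists n, (N <= n)%nat /\ Rabs (u n - L) < eta).
  { intros eta N Heta.
    destruct (HL (disc L (mkposreal _ Heta)) N) as [n [HnN Hn]].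
    - exists (mkposreal _ Heta); intros x Hx; auto.
    - exists n; split; auto. }
  exists L; split; auto.
  split; apply Rnot_lt_le; intro C.
  - destruct (Hnear (a - L) O ltac:(lra)) as [n [_ Hn]].
    generalize (Hu n) (Rle_abs (u n - L)); lra.
  - destruct (Hnear (L - b) O ltac:(lra)) as [n [_ Hn]].
    generalize (Hu n) (Rle_abs (L - u n)) (Rabs_minus_sym (u n) L); lra.
Qed.

Lemma segment_parameter_bound p q r t :
  0 <= t -> dist p (convex_comb q r t) <= dist p q / 2 -> dist p q / 2 <= t * dist q r.
Proof.
  intros Ht Hd.
  assert (E : dist (convex_comb q r t) q = t * dist q r).
  { rewrite <- (convex_comb_0 q r) at 2. rewrite dist_convex_comb, Rminus_0_r, Rabs_right by lra.
    auto. }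
  generalize (dist_triangle p (convex_comb q r t) q); lra.
Qed.

(* One coordinate of the rescaling [r = q + (p - q) / L]: if [q + t (r' - q)] is
   [e1]-close to [p] and [t] is [eta]-close to [L], then [r'] is close to [r]. *)
Lemma rescale_estimate qa ra pa t L m e1 eta :
  0 < m -> m <= t -> m <= L ->
  Rabs (qa + t * (ra - qa) - pa) <= e1 -> Rabs (t - L) <= eta ->
  Rabs (ra - (qa + (pa - qa) / L)) <= e1 / m + Rabs (pa - qa) * eta / (m * m).
Proof.
  intros Hm Ht HL He Hn.
  assert (Ht0 : 0 < t) by lra. assert (HL0 : 0 < L) by lra.
  assert (He1 : 0 <= e1) by (generalize (Rabs_pos (qa + t * (ra - qa) - pa)); lra).
  assert (Heta : 0 <= eta) by (generalize (Rabs_pos (t - L)); lra).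
  assert (Hpq := Rabs_pos (pa - qa)).
  assert (E : ra - (qa + (pa - qa) / L) =
              (L * (qa + t * (ra - qa) - pa) + (L - t) * (pa - qa)) / (t * L))
    by (field; lra).
  rewrite E. unfold Rdiv. rewrite Rabs_mult, Rabs_inv, (Rabs_right (t * L)) by nra.
  assert (Hnum : Rabs (L * (qa + t * (ra - qa) - pa) + (L - t) * (pa - qa))
                 <= L * e1 + eta * Rabs (pa - qa)).
  { eapply Rle_trans; [apply Rabs_triang|]. rewrite !Rabs_mult, (Rabs_right L) by lra.
    rewrite Rabs_minus_sym in Hn. generalize (Rabs_pos (L - t)); nra. }
  apply Rle_trans with ((L * e1 + eta * Rabs (pa - qa)) * / (t * L)).
  { apply Rmult_le_compat_r; [left; apply Rinv_0_lt_compat; nra | auto]. }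
  apply Rle_trans with (e1 / t + eta * Rabs (pa - qa) / (t * L)); [right; field; lra|].
  apply Rplus_le_compat; unfold Rdiv.
  - apply Rmult_le_compat_l; auto. apply Rinv_le_contravar; lra.
  - rewrite (Rmult_comm (Rabs _) eta). apply Rmult_le_compat_l; [nra|].
    apply Rinv_le_contravar; nra.
Qed.

Lemma rescaled_limit_in_closure (A : point -> Prop) p q (t : nat -> R) (r : nat -> point) m L :
  0 < m -> m <= L ->
  (forall n, m <= t n /\ A (r n)) ->
  (forall eps, 0 < eps -> exists N, forall n, (N <= n)%nat ->
     dist p (convex_comb q (r n) (t n)) < eps) ->
  (forall eta N, 0 < eta -> exists n, (N <= n)%nat /\ Rabs (t n - L) < eta) ->
  pclosure A (fst q + (fst p - fst q) / L, snd q + (snd p - snd q) / L).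
Proof.
  intros Hm HmL Htr Hconv Hclust eps Heps.
  set (K := Rabs (fst p - fst q) + Rabs (snd p - snd q) + 1).
  assert (HK : 0 < K) by (unfold K; generalize (Rabs_pos (fst p - fst q)) (Rabs_pos (snd p - snd q)); lra).
  set (eta := eps * (m * m) / (4 * K)).
  assert (Heta : 0 < eta) by (unfold eta; apply Rdiv_lt_0_compat; [apply Rmult_lt_0_compat; [lra|nra]|lra]).
  destruct (Hconv (eps * m / 4)) as [N HN]; [nra|].
  destruct (Hclust eta N Heta) as [n [HnN Hn]].
  destruct (Htr n) as [Htm Hr].
  specialize (HN n HnN).
  exists (r n). split; auto.
  assert (Hx : Rabs (fst q + t n * (fst (r n) - fst q) - fst p) < eps * m / 4).
  { eapply Rle_lt_trans; [|apply HN]. rewrite Rabs_minus_sym. exact (abs_fst_le_dist p (convex_comb q (r n) (t n))). }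
  assert (Hy : Rabs (snd q + t n * (snd (r n) - snd q) - snd p) < eps * m / 4).
  { eapply Rle_lt_trans; [|apply HN]. rewrite Rabs_minus_sym. exact (abs_snd_le_dist p (convex_comb q (r n) (t n))). }
  assert (C1 := rescale_estimate (fst q) (fst (r n)) (fst p) (t n) L m _ _
                  Hm Htm HmL (Rle_refl _) (Rlt_le _ _ Hn)).
  assert (C2 := rescale_estimate (snd q) (snd (r n)) (snd p) (t n) L m _ _
                  Hm Htm HmL (Rle_refl _) (Rlt_le _ _ Hn)).
  rewrite dist_comm. eapply Rle_lt_trans; [apply dist_le_l1|]. simpl.
  assert (Z1 : Rabs (fst q + t n * (fst (r n) - fst q) - fst p) / m < eps / 4).
  { apply Rmult_lt_reg_r with m; auto. unfold Rdiv; rewrite Rmult_assoc, Rinv_l, Rmult_1_r by lra. nra. }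
  assert (Z2 : Rabs (snd q + t n * (snd (r n) - snd q) - snd p) / m < eps / 4).
  { apply Rmult_lt_reg_r with m; auto. unfold Rdiv; rewrite Rmult_assoc, Rinv_l, Rmult_1_r by lra. nra. }
  assert (Z3 : Rabs (fst p - fst q) * eta / (m * m) + Rabs (snd p - snd q) * eta / (m * m) <= eps / 4).
  { replace (Rabs (fst p - fst q) * eta / (m * m) + Rabs (snd p - snd q) * eta / (m * m))
      with ((Rabs (fst p - fst q) + Rabs (snd p - snd q)) * eps / (4 * K))
      by (unfold eta; field; repeat split; lra).
    apply Rmult_le_reg_r with (4 * K); [lra|].
    unfold Rdiv; rewrite Rmult_assoc, Rinv_l, Rmult_1_r by lra. unfold K. nra. }
  lra.
Qed.

Lemma hull_cons_approximation q l p : pclosure (in_hull (q :: l)) p -> p <> q ->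
  exists (t : nat -> R) (r : nat -> point), forall n,
    0 < t n <= 1 /\ in_hull l (r n) /\
    dist p (convex_comb q (r n) (t n)) < Rmin (dist p q / 2) (/ INR (S n)).
Proof.
  intros Hp Hne.
  assert (Hd : 0 < dist p q).
  { destruct (dist_nonneg p q) as [?|E]; auto. exfalso; apply Hne, dist_eq_0; auto. }
  assert (Hseq : forall n : nat, exists tr : R * point,
    0 < fst tr <= 1 /\ in_hull l (snd tr) /\
    dist p (convex_comb q (snd tr) (fst tr)) < Rmin (dist p q / 2) (/ INR (S n))).
  { intro n. assert (Hn : 0 < Rmin (dist p q / 2) (/ INR (S n))).
    { apply Rmin_glb_lt; [lra|]. apply Rinv_0_lt_compat, lt_0_INR; lia. }
    destruct (Hp _ Hn) as [p' [Hp' Hdp]].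
    apply hull_cons in Hp' as [->|[t [r [Ht [Hr ->]]]]].
    - exfalso. generalize (Rmin_l (dist p q / 2) (/ INR (S n))). lra.
    - exists (t, r); simpl; auto. }
  apply seq_choice in Hseq as [f Hf].
  exists (fun n => fst (f n)), (fun n => snd (f n)). auto.
Qed.

Lemma segment_parameters_bounded_below (A : point -> Prop) p q (t : nat -> R) (r : nat -> point) :
  is_bounded A -> 0 < dist p q ->
  (forall n, 0 <= t n /\ A (r n) /\ dist p (convex_comb q (r n) (t n)) <= dist p q / 2) ->
  exists m, 0 < m /\ forall n, m <= t n.
Proof.
  intros [B HB] Hd Htr.
  assert (HB0 : 0 <= B).
  { destruct (Htr O) as [_ [Hr _]]. destruct (HB _ Hr). generalize (Rabs_pos (fst (r O))); lra. }
  set (D := Rabs (fst q) + Rabs (snd q) + 2 * B + 1).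
  assert (HD : 0 < D) by (unfold D; generalize (Rabs_pos (fst q)) (Rabs_pos (snd q)); lra).
  exists (dist p q / (2 * D)). split; [apply Rdiv_lt_0_compat; lra|]. intro n.
  destruct (Htr n) as [Ht [Hr Hdn]].
  assert (Hpar := segment_parameter_bound p q (r n) (t n) Ht Hdn).
  assert (HqD : dist q (r n) <= D).
  { eapply Rle_trans; [apply dist_le_l1|]. destruct (HB _ Hr) as [Bx By].
    generalize (Rabs_triang (fst q) (- fst (r n))) (Rabs_triang (snd q) (- snd (r n))).
    rewrite !Rabs_Ropp. unfold Rminus, D. lra. }
  apply Rmult_le_reg_r with (2 * D); [lra|].
  unfold Rdiv; rewrite Rmult_assoc, Rinv_l, Rmult_1_r by lra. nra.
Qed.

Lemma hull_closed l : is_closed (in_hull l).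
Proof.
  induction l as [|q l IH]; intros p Hp.
  { destruct (Hp 1) as [q [Hq _]]; [lra|]. destruct (hull_nil _ Hq). }
  apply hull_cons. destruct (classic (p = q)) as [E|Hne]; [left; auto|right].
  assert (Hd : 0 < dist p q).
  { destruct (dist_nonneg p q) as [?|E]; auto. exfalso; apply Hne, dist_eq_0; auto. }
  destruct (hull_cons_approximation q l p Hp Hne) as [t [r Htr]].
  destruct (segment_parameters_bounded_below (in_hull l) p q t r (hull_bounded l) Hd)
    as [m [Hm Hlow]].
  { intro n. destruct (Htr n) as [Ht [Hr Hdn]]. split; [lra|split; [auto|]].
    generalize (Rmin_l (dist p q / 2) (/ INR (S n))); lra. }
  assert (Ht1 : forall n, m <= t n <= 1) by (intro n; split; [apply Hlow|apply Htr]).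
  destruct (cluster_value t m 1 Ht1) as [L [HLr HL]].
  exists L, (fst q + (fst p - fst q) / L, snd q + (snd p - snd q) / L).
  split; [lra|split].
  - apply IH, (rescaled_limit_in_closure _ p q t r m L); auto;
      [lra|intro n; split; [apply Hlow|apply Htr]|].
    (* the approximation error is below [/ INR (S n)] *)
    intros eps Heps. destruct (archimed_cor1 eps Heps) as [N [HN HN0]].
    exists N. intros n Hn. destruct (Htr n) as [_ [_ Hdn]].
    eapply Rlt_le_trans; [apply Hdn|]. eapply Rle_trans; [apply Rmin_r|].
    left. eapply Rle_lt_trans; [|apply HN].
    apply Rinv_le_contravar; [apply lt_0_INR; auto|apply le_INR; lia].
  - unfold convex_comb; simpl. destruct p as [px py]; simpl. f_equal; field; lra.
Qed.

Lemma convex_polygon_convex_closed_bounded P0 : convex_polygon P0 ->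
  is_convex P0 /\ is_closed P0 /\ is_bounded P0.
Proof.
  intros [[l Hl] _]. split; [|split].
  - intros a b t Ha Hb Ht. apply Hl, hull_convex; auto; apply Hl; auto.
  - intros p Hp. apply Hl, hull_closed. intros e He. destruct (Hp e He) as [q [Hq Hd]].
    exists q; split; auto; apply Hl; auto.
  - destruct (hull_bounded l) as [B HB]. exists B. intros p Hp; apply HB, Hl; auto.
Qed.

(** Staircases: monotone Lipschitz curves, whose length is the l1-displacement. *)

Definition lipschitz01 (g : R -> point) (K : R) : Prop :=
  forall u v, 0 <= u <= 1 -> 0 <= v <= 1 -> dist (g u) (g v) <= K * Rabs (u - v).

Definition monotone01 (g : R -> point) : Prop :=
  forall u v, 0 <= u -> u <= v -> v <= 1 -> fst (g u) <= fst (g v) /\ snd (g u) <= snd (g v).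

Definition staircase (A : point -> Prop) (a c : point) : Prop :=
  exists g K, 0 <= K /\ lipschitz01 g K /\ monotone01 g /\ g 0 = a /\ g 1 = c /\
    forall u, 0 <= u <= 1 -> A (g u).

Lemma staircase_segment (A : point -> Prop) a c :
  fst a <= fst c -> snd a <= snd c ->
  (forall l, 0 <= l <= 1 -> A (convex_comb a c l)) -> staircase A a c.
Proof.
  intros Hx Hy HA. exists (convex_comb a c), (dist a c).
  split; [apply dist_nonneg|]. split; [|split; [|split; [|split]]].
  - intros u v _ _. rewrite dist_convex_comb, Rmult_comm; lra.
  - intros u v Hu Huv Hv. unfold convex_comb; simpl. split; nra.
  - apply convex_comb_0.
  - apply convex_comb_1.
  - auto.
Qed.

Lemma staircase_horizontal (A : point -> Prop) x0 x1 y :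
  x0 <= x1 -> (forall x, x0 <= x <= x1 -> A (x, y)) -> staircase A (x0, y) (x1, y).
Proof.
  intros Hle HA. apply staircase_segment; simpl; try lra. intros l Hl. unfold convex_comb; simpl.
  replace (y + l * (y - y)) with y by ring. apply HA; nra.
Qed.

Lemma staircase_vertical (A : point -> Prop) x y0 y1 :
  y0 <= y1 -> (forall y, y0 <= y <= y1 -> A (x, y)) -> staircase A (x, y0) (x, y1).
Proof.
  intros Hle HA. apply staircase_segment; simpl; try lra. intros l Hl. unfold convex_comb; simpl.
  replace (x + l * (x - x)) with x by ring. apply HA; nra.
Qed.

Definition concat (g1 g2 : R -> point) (u : R) : point :=
  if Rle_dec u (1/2) then g1 (2 * u) else g2 (2 * u - 1).

Lemma concat_lipschitz g1 g2 K1 K2 : 0 <= K1 -> 0 <= K2 ->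
  lipschitz01 g1 K1 -> lipschitz01 g2 K2 -> g1 1 = g2 0 ->
  lipschitz01 (concat g1 g2) (2 * (K1 + K2)).
Proof.
  intros HK1 HK2 L1 L2 E.
  (* two parameters on different halves: pass through the junction point *)
  assert (Mixed : forall u v, 0 <= u <= 1/2 -> 1/2 < v <= 1 ->
            dist (g1 (2 * u)) (g2 (2 * v - 1)) <= 2 * (K1 + K2) * Rabs (u - v)).
  { intros u v Hu Hv. eapply Rle_trans; [apply (dist_triangle _ (g1 1))|].
    assert (E1 := L1 (2 * u) 1 ltac:(lra) ltac:(lra)).
    assert (E2 := L2 0 (2 * v - 1) ltac:(lra) ltac:(lra)). rewrite <- E in E2.
    rewrite Rabs_left1 in E1, E2 |- * by lra. nra. }
  intros u v Hu Hv. unfold concat.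
  destruct (Rle_dec u (1/2)), (Rle_dec v (1/2)).
  - eapply Rle_trans; [apply L1; lra|].
    replace (2 * u - 2 * v) with (2 * (u - v)) by ring. rewrite Rabs_mult, Rabs_right by lra.
    generalize (Rabs_pos (u - v)); nra.
  - apply Mixed; lra.
  - rewrite dist_comm, Rabs_minus_sym. apply Mixed; lra.
  - eapply Rle_trans; [apply L2; lra|].
    replace (2 * u - 1 - (2 * v - 1)) with (2 * (u - v)) by ring.
    rewrite Rabs_mult, Rabs_right by lra.
    generalize (Rabs_pos (u - v)); nra.
Qed.

Lemma concat_monotone g1 g2 : monotone01 g1 -> monotone01 g2 -> g1 1 = g2 0 ->
  monotone01 (concat g1 g2).
Proof.
  intros M1 M2 E u v Hu Huv Hv. unfold concat.
  destruct (Rle_dec u (1/2)), (Rle_dec v (1/2)); try lra.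
  - apply M1; lra.
  - destruct (M1 (2 * u) 1) as [X1 Y1]; try lra.
    destruct (M2 0 (2 * v - 1)) as [X2 Y2]; try lra.
    rewrite E in X1, Y1. split; lra.
  - apply M2; lra.
Qed.

Lemma staircase_trans A a b c : staircase A a b -> staircase A b c -> staircase A a c.
Proof.
  intros [g1 [K1 [HK1 [L1 [M1 [A1 [B1 I1]]]]]]] [g2 [K2 [HK2 [L2 [M2 [A2 [B2 I2]]]]]]].
  assert (E : g1 1 = g2 0) by congruence.
  exists (concat g1 g2), (2 * (K1 + K2)). split; [lra|]. split; [apply concat_lipschitz; auto|].
  split; [apply concat_monotone; auto|]. unfold concat. split; [|split].
  - destruct (Rle_dec 0 (1/2)); [|lra]. rewrite Rmult_0_r; auto.
  - destruct (Rle_dec 1 (1/2)); [lra|]. replace (2 * 1 - 1) with 1 by ring; auto.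
  - intros u Hu. destruct (Rle_dec u (1/2)); [apply I1 | apply I2]; lra.
Qed.

Lemma staircase_le A s t : staircase A s t -> fst s <= fst t /\ snd s <= snd t.
Proof. intros [g [K [_ [_ [M [G0 [G1 _]]]]]]]. rewrite <- G0, <- G1. apply M; lra. Qed.

Lemma staircase_end A s t : staircase A s t -> A t.
Proof. intros [g [K [_ [_ [_ [_ [G1 I]]]]]]]. rewrite <- G1. apply I; lra. Qed.

Fixpoint sorted_from (a : R) (ts : list R) : Prop :=
  match ts with nil => True | t :: r => a <= t /\ sorted_from t r end.

Lemma sorted_from_nth ts : forall a,
  (forall i, (S i < length ts)%nat -> nth i ts 0 <= nth (S i) ts 0) ->
  (match ts with nil => True | t :: _ => a <= t end) -> sorted_from a ts.
Proof.
  induction ts as [|t r IH]; simpl; intros a Hn Ha; auto. split; auto.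
  apply IH.
  - intros i Hi. apply (Hn (S i)). simpl. lia.
  - destruct r as [|t' r']; auto. apply (Hn O). simpl; lia.
Qed.

Lemma monotone_poly_len g : monotone01 g -> forall ts t0, 0 <= t0 <= 1 ->
  (forall t, In t ts -> 0 <= t <= 1) -> sorted_from t0 ts ->
  poly_len g t0 ts <= (fst (g 1) - fst (g t0)) + (snd (g 1) - snd (g t0)).
Proof.
  intros Hm. induction ts as [|t r IH]; simpl; intros t0 Ht0 Hin Hs.
  - destruct (Hm t0 1) as [X Y]; lra.
  - destruct Hs as [Hle Hs]. assert (Ht : 0 <= t <= 1) by auto.
    assert (IH' := IH t Ht (fun x Hx => Hin x (or_intror Hx)) Hs).
    destruct (Hm t0 t) as [X Y]; try lra.
    assert (Hd := dist_le_l1 (g t0) (g t)).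
    rewrite (Rabs_minus_sym (fst (g t0))), (Rabs_minus_sym (snd (g t0))), !Rabs_right in Hd by lra.
    lra.
Qed.

Lemma staircase_path A s t : staircase A s t ->
  exists g, path_in A g s t /\ length_le g ((fst t - fst s) + (snd t - snd s)).
Proof.
  intros [g [K [HK [L [M [G0 [G1 I]]]]]]]. exists g. split; [split; [|split; [|split]]|]; auto.
  - intros x Hx eps Heps. exists (eps / (K + 1)). split; [apply Rdiv_lt_0_compat; lra|].
    intros u Hu Hux. eapply Rle_lt_trans; [apply L; auto|].
    apply Rle_lt_trans with (K * (eps / (K + 1))); [apply Rmult_le_compat_l; lra|].
    apply Rmult_lt_reg_r with (K + 1); [lra|]. unfold Rdiv.
    rewrite Rmult_assoc, (Rmult_assoc eps), Rinv_l, Rmult_1_r by lra. nra.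
  - intros ts Hin Hn. rewrite <- G0, <- G1. apply monotone_poly_len; auto; [lra|].
    apply sorted_from_nth; auto. destruct ts; auto. apply (Hin r (or_introl eq_refl)).
Qed.

Definition rect_xmin (r : R * R * R * R) : R := let '(a, _, _, _) := r in a.
Definition rect_xmax (r : R * R * R * R) : R := let '(_, b, _, _) := r in b.
Definition rect_ymin (r : R * R * R * R) : R := let '(_, _, c, _) := r in c.
Definition rect_ymax (r : R * R * R * R) : R := let '(_, _, _, d) := r in d.

Lemma rect_iff r p : rect r p <->
  (rect_xmin r <= fst p <= rect_xmax r /\ rect_ymin r <= snd p <= rect_ymax r).
Proof. destruct r as [[[a b] c] d]; simpl; tauto. Qed.

Lemma pinterior_sub A p : pinterior A p -> A p.
Proof. intros [e [He Hq]]. apply Hq. rewrite dist_self; auto. Qed.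

Lemma pinterior_rect r p : pinterior (rect r) p <->
  (rect_xmin r < fst p < rect_xmax r /\ rect_ymin r < snd p < rect_ymax r).
Proof.
  destruct p as [x y]; simpl. split.
  - intros [e [He Hq]].
    assert (H1 := Hq (x - e / 2, y)). assert (H2 := Hq (x + e / 2, y)).
    assert (H3 := Hq (x, y - e / 2)). assert (H4 := Hq (x, y + e / 2)).
    rewrite dist_horizontal in H1, H2. rewrite dist_vertical in H3, H4.
    rewrite Rabs_right in H1, H3 by lra. rewrite Rabs_left in H2, H4 by lra.
    rewrite rect_iff in H1, H2, H3, H4; simpl in *.
    destruct (H1 ltac:(lra)), (H2 ltac:(lra)), (H3 ltac:(lra)), (H4 ltac:(lra)). lra.
  - intros Hr.
    exists (Rmin (Rmin (x - rect_xmin r) (rect_xmax r - x)) (Rmin (y - rect_ymin r) (rect_ymax r - y))).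
    split; [repeat apply Rmin_glb_lt; lra|].
    intros q Hq. rewrite rect_iff.
    assert (Hx := abs_fst_le_dist (x, y) q). assert (Hy := abs_snd_le_dist (x, y) q).
    simpl in Hx, Hy.
    generalize (Rmin_l (Rmin (x - rect_xmin r) (rect_xmax r - x)) (Rmin (y - rect_ymin r) (rect_ymax r - y)))
      (Rmin_r (Rmin (x - rect_xmin r) (rect_xmax r - x)) (Rmin (y - rect_ymin r) (rect_ymax r - y)))
      (Rmin_l (x - rect_xmin r) (rect_xmax r - x)) (Rmin_r (x - rect_xmin r) (rect_xmax r - x))
      (Rmin_l (y - rect_ymin r) (rect_ymax r - y)) (Rmin_r (y - rect_ymin r) (rect_ymax r - y)).
    generalize (Rle_abs (x - fst q)) (Rle_abs (y - snd q))
      (Rle_abs (fst q - x)) (Rle_abs (snd q - y))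
      (Rabs_minus_sym x (fst q)) (Rabs_minus_sym y (snd q)).
    intros. lra.
Qed.

Lemma hole_boundary_in_domain P0 h H i p :
  (forall i, (i < h)%nat -> forall p, rect (H i) p -> P0 p) ->
  (forall i j, (i < h)%nat -> (j < h)%nat -> i <> j ->
     forall p, ~ (rect (H i) p /\ rect (H j) p)) ->
  (i < h)%nat -> rect (H i) p -> ~ pinterior (rect (H i)) p -> domain P0 h H p.
Proof.
  intros Hin Hdis Hi Hr Hnint. split; [eapply Hin; eauto|]. intros j Hj Hint.
  destruct (Nat.eq_dec i j) as [<-|Hne]; [auto|].
  apply (Hdis i j Hi Hj Hne p). split; auto. apply pinterior_sub; auto.
Qed.

Lemma horizontal_exit (P0 : point -> Prop) x0 y0 :
  is_convex P0 -> is_closed P0 -> is_bounded P0 -> P0 (x0, y0) ->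
  exists X0, x0 <= X0 /\ pboundary P0 (X0, y0) /\ forall x, x0 <= x <= X0 -> P0 (x, y0).
Proof.
  intros Hc Hcl [B HB] H0.
  set (S := fun x => x0 <= x /\ P0 (x, y0)).
  destruct (completeness S) as [X0 [Hub Hl]].
  { exists B. intros x [_ Hx]. destruct (HB _ Hx) as [Hb _]. simpl in Hb. generalize (Rle_abs x); lra. }
  { exists x0; split; [lra|auto]. }
  assert (Hx0 : x0 <= X0) by (apply Hub; split; [lra|auto]).
  (* the supremum is attained since [P0] is closed *)
  assert (HP : P0 (X0, y0)).
  { apply Hcl. intros eps Heps.
    destruct (classic (exists x, S x /\ X0 - eps < x)) as [[x [Sx Hx]]|Hn].
    - exists (x, y0). split; [apply Sx|]. rewrite dist_horizontal.
      assert (x <= X0) by (apply Hub; auto). rewrite Rabs_right by lra. lra.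
    - exfalso. assert (X0 <= X0 - eps); [|lra].
      apply Hl. intros x Sx. apply Rnot_lt_le. intro C. apply Hn; eauto. }
  exists X0. split; [auto|split; [split|]].
  - intros eps Heps. exists (X0, y0); split; auto. rewrite dist_self; auto.
  - intros [e [He Hq]]. assert (S (X0 + e / 2)).
    { split; [lra|]. apply Hq. rewrite dist_horizontal, Rabs_left by lra. lra. }
    assert (X0 + e / 2 <= X0) by (apply Hub; auto). lra.
  -
    intros x Hx. destruct (Req_dec X0 x0) as [E|E].
    + replace x with x0 by lra. auto.
    + replace (x, y0) with (convex_comb (x0, y0) (X0, y0) ((x - x0) / (X0 - x0))).
      * apply Hc; auto. split.
        -- apply Rmult_le_pos; [lra|left; apply Rinv_0_lt_compat; lra].
        -- apply Rmult_le_reg_r with (X0 - x0); [lra|].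
           unfold Rdiv; rewrite Rmult_assoc, Rinv_l, Rmult_1_r by lra. lra.
      * unfold convex_comb; simpl; f_equal; [field; lra|ring].
Qed.

(** Escaping to the outer boundary along a staircase. *)

Fixpoint holes_right_of (H : nat -> R * R * R * R) (k : nat) (x : R) : nat :=
  match k with
  | O => O
  | S k => (holes_right_of H k x + if Rlt_dec x (rect_xmax (H k)) then 1 else 0)%nat
  end.

Lemma holes_right_of_antimono H k x x' : x <= x' -> (holes_right_of H k x' <= holes_right_of H k x)%nat.
Proof.
  intro Hx. induction k; simpl; [lia|].
  destruct (Rlt_dec x' (rect_xmax (H k))), (Rlt_dec x (rect_xmax (H k))); try lia. lra.
Qed.

Lemma holes_right_of_pass H k x x' i : (i < k)%nat -> x < rect_xmax (H i) <= x' ->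
  (holes_right_of H k x' < holes_right_of H k x)%nat.
Proof.
  intros Hi Hx. induction k; [lia|]. simpl.
  assert (Hm := holes_right_of_antimono H k x x' ltac:(lra)).
  destruct (Nat.eq_dec i k) as [->|Hne].
  - destruct (Rlt_dec x' (rect_xmax (H k))), (Rlt_dec x (rect_xmax (H k))); try lra. lia.
  - assert (IH : (holes_right_of H k x' < holes_right_of H k x)%nat) by (apply IHk; lia).
    destruct (Rlt_dec x' (rect_xmax (H k))), (Rlt_dec x (rect_xmax (H k))); try lia; lra.
Qed.

Lemma argmin_below (P : nat -> Prop) (f : nat -> R) k : (exists i, (i < k)%nat /\ P i) ->
  exists i, (i < k)%nat /\ P i /\ forall j, (j < k)%nat -> P j -> f i <= f j.
Proof.
  induction k as [|k IH]; intros [i [Hi Pi]]; [lia|].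
  destruct (classic (exists i, (i < k)%nat /\ P i)) as [Ex|NEx].
  - destruct (IH Ex) as [i0 [Hi0 [Pi0 Hmin]]].
    destruct (classic (P k /\ f k < f i0)) as [[Pk Hlt]|Hn].
    + exists k. split; [lia|split; auto]. intros j Hj Pj.
      destruct (Nat.eq_dec j k) as [->|]; [lra|].
      assert (f i0 <= f j) by (apply Hmin; auto; lia). lra.
    + exists i0. split; [lia|split; auto]. intros j Hj Pj.
      destruct (Nat.eq_dec j k) as [->|]; [|apply Hmin; auto; lia].
      apply Rnot_lt_le. intro C; apply Hn; auto.
  - exists k. assert (i = k) as ->.
    { destruct (Nat.eq_dec i k); auto. exfalso; apply NEx; exists i; split; auto; lia. }
    split; [lia|split; auto]. intros j Hj Pj.
    destruct (Nat.eq_dec j k) as [->|]; [lra|]. exfalso; apply NEx; exists j; split; auto; lia.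
Qed.

(* The interior of the rectangle [r] meets the horizontal ray going right from [(x0, y0)]. *)
Definition blocks (r : R * R * R * R) (x0 y0 : R) : Prop :=
  rect_ymin r < y0 < rect_ymax r /\ x0 < rect_xmax r /\ rect_xmin r < rect_xmax r.

Lemma interior_on_ray_blocks r x0 x y0 : x0 <= x -> pinterior (rect r) (x, y0) ->
  blocks r x0 y0 /\ rect_xmin r < x.
Proof. intros Hx Hint. apply pinterior_rect in Hint; simpl in Hint. unfold blocks; lra. Qed.

Section Escape.

Variables (P0 : point -> Prop) (h : nat) (H : nat -> R * R * R * R).
Hypothesis P0_convex : is_convex P0.
Hypothesis P0_closed : is_closed P0.
Hypothesis P0_bounded : is_bounded P0.
Hypothesis holes_in_P0 : forall i, (i < h)%nat -> forall p, rect (H i) p -> P0 p.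
Hypothesis holes_disjoint : forall i j, (i < h)%nat -> (j < h)%nat -> i <> j ->
  forall p, ~ (rect (H i) p /\ rect (H j) p).

Lemma blocking_hole_right x0 y0 i : domain P0 h H (x0, y0) -> (i < h)%nat ->
  blocks (H i) x0 y0 -> x0 <= rect_xmin (H i).
Proof.
  intros [_ Hni] Hi [Hy [Hx Hab]]. apply Rnot_lt_le; intro C.
  apply (Hni i Hi). apply pinterior_rect; simpl; lra.
Qed.

Lemma detour_around_hole x0 y0 i : (i < h)%nat -> blocks (H i) x0 y0 ->
  x0 <= rect_xmin (H i) ->
  (forall x, x0 <= x <= rect_xmin (H i) -> domain P0 h H (x, y0)) ->
  staircase (domain P0 h H) (x0, y0) (rect_xmax (H i), rect_ymax (H i)).
Proof.
  intros Hi [Hy [Hx Hab]] Hxa Hseg.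
  assert (Hbd : forall p, rect (H i) p -> ~ pinterior (rect (H i)) p -> domain P0 h H p)
    by (intros; eapply hole_boundary_in_domain; eauto).
  apply staircase_trans with (rect_xmin (H i), y0);
    [|apply staircase_trans with (rect_xmin (H i), rect_ymax (H i))].
  - apply staircase_horizontal; auto.
  - apply staircase_vertical; [lra|]. intros y Hy'.
    apply Hbd; [apply rect_iff; simpl; lra | rewrite pinterior_rect; simpl; lra].
  - apply staircase_horizontal; [lra|]. intros x Hx'.
    apply Hbd; [apply rect_iff; simpl; lra | rewrite pinterior_rect; simpl; lra].
Qed.

(* Go right from [q]: either we reach the outer boundary, or we go around the first
   blocking hole, leaving one more hole behind. *)
Lemma escape_step q : domain P0 h H q ->
  (exists t, pboundary P0 t /\ staircase (domain P0 h H) q t) \/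
  (exists q', staircase (domain P0 h H) q q' /\
     (holes_right_of H h (fst q') < holes_right_of H h (fst q))%nat).
Proof.
  destruct q as [x0 y0]; intro Hq.
  destruct (horizontal_exit P0 x0 y0 P0_convex P0_closed P0_bounded (proj1 Hq))
    as [X0 [HX0 [Hbd Hray]]].
  destruct (classic (exists i, (i < h)%nat /\ (blocks (H i) x0 y0 /\ rect_xmin (H i) < X0)))
    as [Ex|NEx].
  - right.
    destruct (argmin_below (fun i => blocks (H i) x0 y0) (fun i => rect_xmin (H i)) h)
      as [i [Hi [Bi Hmin]]]; [destruct Ex as [j [Hj [Bj _]]]; eauto|].
    assert (HaX : rect_xmin (H i) < X0).
    { destruct Ex as [j [Hj [Bj Hjx]]]. assert (Hij := Hmin j Hj Bj). lra. }
    assert (Hxa := blocking_hole_right x0 y0 i Hq Hi Bi).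
    exists (rect_xmax (H i), rect_ymax (H i)). split.
    + apply detour_around_hole; auto. intros x Hx. split; [apply Hray; lra|].
      intros j Hj Hint. destruct (interior_on_ray_blocks _ x0 x y0 ltac:(lra) Hint) as [Bj Hjx].
      assert (Hij := Hmin j Hj Bj). lra.
    + destruct Bi as [_ [Hb _]]. simpl. apply (holes_right_of_pass H h x0 _ i); auto; lra.
  - left. exists (X0, y0). split; [auto|]. apply staircase_horizontal; auto.
    intros x Hx. split; [apply Hray; auto|]. intros j Hj Hint.
    destruct (interior_on_ray_blocks _ x0 x y0 ltac:(lra) Hint) as [Bj Hjx].
    apply NEx. exists j. repeat split; auto; try apply Bj. lra.
Qed.

(* Iterating [escape_step], which can go around each hole only once. *)
Lemma escape_up_right q : domain P0 h H q ->
  exists t, pboundary P0 t /\ staircase (domain P0 h H) q t.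
Proof.
  remember (holes_right_of H h (fst q)) as n eqn:En.
  revert q En. induction n as [n IH] using lt_wf_ind. intros q En Hq.
  destruct (escape_step q Hq) as [Done|[q' [Hqq' Hlt]]]; [auto|].
  destruct (IH (holes_right_of H h (fst q')) ltac:(lia) q' eq_refl (staircase_end _ _ _ Hqq'))
    as [t [Ht Hq't]].
  exists t. split; auto. eapply staircase_trans; eauto.
Qed.

End Escape.

(** The point reflection [p |-> -p] turns up-right staircases into down-left ones. *)

Definition neg (p : point) : point := (- fst p, - snd p).

Definition neg_rect (r : R * R * R * R) : R * R * R * R :=
  let '(a, b, c, d) := r in (-b, -a, -d, -c).

Lemma neg_involutive p : neg (neg p) = p.
Proof. destruct p; unfold neg; simpl; f_equal; ring. Qed.

Lemma dist_neg p q : dist (neg p) (neg q) = dist p q.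
Proof. unfold dist, neg; cbn [fst snd]; f_equal; ring. Qed.

Lemma pinterior_neg A p : pinterior (fun x => A (neg x)) p <-> pinterior A (neg p).
Proof.
  split; intros [e [He Hq]]; exists e; split; auto; intros q Hd.
  - rewrite <- (neg_involutive q). apply Hq. rewrite <- dist_neg, neg_involutive. auto.
  - apply Hq. rewrite dist_neg. auto.
Qed.

Lemma pclosure_neg A p : pclosure (fun x => A (neg x)) p <-> pclosure A (neg p).
Proof.
  split; intros Hc e He; destruct (Hc e He) as [q [Hq Hd]].
  - exists (neg q). split; auto. rewrite dist_neg; auto.
  - exists (neg q). split; [rewrite neg_involutive; auto|].
    rewrite <- dist_neg, neg_involutive; auto.
Qed.

Lemma pboundary_neg A p : pboundary (fun x => A (neg x)) p -> pboundary A (neg p).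
Proof.
  intros [H1 H2]. split; [apply pclosure_neg; auto|]. intro C; apply H2, pinterior_neg; auto.
Qed.

Lemma rect_neg r p : rect (neg_rect r) p <-> rect r (neg p).
Proof. destruct r as [[[a b] c] d]; unfold neg; simpl. lra. Qed.

Lemma domain_neg P0 h H p :
  domain (fun x => P0 (neg x)) h (fun i => neg_rect (H i)) p <-> domain P0 h H (neg p).
Proof.
  assert (Hint : forall r, pinterior (rect (neg_rect r)) p <-> pinterior (rect r) (neg p)).
  { intro r. rewrite <- pinterior_neg. split; intros [e [He Hq]]; exists e; split; auto;
      intros q Hd; apply rect_neg; auto. }
  unfold domain. split; intros [H1 H2]; split; auto; intros i Hi C; apply (H2 i Hi), Hint; auto.
Qed.

Lemma path_in_mono (A B : point -> Prop) g s t :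
  (forall x, A x -> B x) -> path_in A g s t -> path_in B g s t.
Proof. intros AB [C [G0 [G1 I]]]. repeat split; auto. Qed.

Lemma path_in_neg A g s t : path_in (fun x => A (neg x)) g s t ->
  path_in A (fun u => neg (g u)) (neg s) (neg t).
Proof.
  intros [C [G0 [G1 I]]]. split; [|split; [|split]].
  - intros x Hx e He. destruct (C x Hx e He) as [del [Hdel Hq]]. exists del; split; auto.
    intros u Hu Hux. rewrite dist_neg. auto.
  - rewrite G0; auto.
  - rewrite G1; auto.
  - intros u Hu. apply I; auto.
Qed.

Lemma poly_len_neg g z ts : poly_len (fun u => neg (g u)) z ts = poly_len g z ts.
Proof. revert z; induction ts as [|x r IH]; intro z; simpl; auto. rewrite dist_neg, IH; auto. Qed.

Lemma length_le_neg g L : length_le g L -> length_le (fun u => neg (g u)) L.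
Proof. intros Hl ts T1 T2. rewrite poly_len_neg. apply Hl; auto. Qed.

Definition admissible (P0 : point -> Prop) (h : nat) (H : nat -> R * R * R * R) : Prop :=
  is_convex P0 /\ is_closed P0 /\ is_bounded P0 /\
  (forall i, (i < h)%nat -> forall p, rect (H i) p -> P0 p) /\
  (forall i j, (i < h)%nat -> (j < h)%nat -> i <> j -> forall p, ~ (rect (H i) p /\ rect (H j) p)).

Lemma admissible_neg P0 h H : admissible P0 h H ->
  admissible (fun x => P0 (neg x)) h (fun i => neg_rect (H i)).
Proof.
  intros [Hc [Hcl [[B HB] [Hin Hdis]]]]. split; [|split; [|split; [|split]]].
  - intros a b l Ha Hb Hl. replace (neg (convex_comb a b l)) with (convex_comb (neg a) (neg b) l)
      by (unfold neg, convex_comb; simpl; f_equal; ring). apply Hc; auto.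
  - intros p Hp. apply Hcl, pclosure_neg; auto.
  - exists B. intros p Hp. destruct (HB _ Hp) as [X Y]. simpl in X, Y. rewrite Rabs_Ropp in X, Y. auto.
  - intros i Hi p Hr. apply (Hin i Hi), rect_neg; auto.
  - intros i j Hi Hj Hij p [R1 R2]. apply (Hdis i j Hi Hj Hij (neg p)).
    rewrite <- !rect_neg; auto.
Qed.

Lemma escape_path_up_right P0 h H s : admissible P0 h H -> domain P0 h H s ->
  exists t, pboundary P0 t /\ fst s <= fst t /\ snd s <= snd t /\
    exists g, path_in (domain P0 h H) g s t /\ length_le g ((fst t - fst s) + (snd t - snd s)).
Proof.
  intros [Hc [Hcl [Hb [Hin Hdis]]]] Hs.
  destruct (escape_up_right P0 h H Hc Hcl Hb Hin Hdis s Hs) as [t [Ht Hst]].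
  destruct (staircase_le _ _ _ Hst). exists t.
  split; [auto|split; [auto|split; [auto|]]]. apply staircase_path; auto.
Qed.

Lemma escape_path_down_left P0 h H s : admissible P0 h H -> domain P0 h H s ->
  exists t, pboundary P0 t /\ fst t <= fst s /\ snd t <= snd s /\
    exists g, path_in (domain P0 h H) g s t /\ length_le g ((fst s - fst t) + (snd s - snd t)).
Proof.
  intros Hadm Hs.
  assert (Hs' : domain (fun x => P0 (neg x)) h (fun i => neg_rect (H i)) (neg s))
    by (apply domain_neg; rewrite neg_involutive; auto).
  destruct (escape_path_up_right _ _ _ _ (admissible_neg _ _ _ Hadm) Hs')
    as [t [Ht [Hx [Hy [g [Hg Hlen]]]]]].
  exists (neg t). simpl in Hx, Hy |- *. split; [apply pboundary_neg; auto|split; [lra|split; [lra|]]].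
  exists (fun u => neg (g u)). split.
  - rewrite <- (neg_involutive s). apply path_in_neg.
    revert Hg. apply path_in_mono. intros x Hxdom. apply domain_neg; auto.
  - replace (fst s - - fst t + (snd s - - snd t))
      with (fst t - fst (neg s) + (snd t - snd (neg s))) by (simpl; ring).
    apply length_le_neg; auto.
Qed.

Lemma path_in_end A g s t : path_in A g s t -> A t.
Proof. intros [_ [_ [G1 I]]]. rewrite <- G1. apply I; lra. Qed.

(* Main result: one of the two escape paths has length at most [diam_2(P)], since
   their total length is the l1-distance between their endpoints. *)
Theorem proposition3 :
  forall (h : nat) (P0 : point -> Prop) (H : nat -> R * R * R * R),
    convex_polygon P0 ->
    (forall i, (i < h)%nat -> nondeg_rect (H i)) ->
    (forall i, (i < h)%nat -> forall p, rect (H i) p -> pinterior P0 p) ->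
    (forall i j, (i < h)%nat -> (j < h)%nat -> i <> j ->
       forall p, ~ (rect (H i) p /\ rect (H j) p)) ->
    forall (d : R), diam2 (domain P0 h H) d ->
    forall s, domain P0 h H s ->
    exists (g : R -> point) (t : point),
      pboundary P0 t /\ path_in (domain P0 h H) g s t /\ length_le g d.
Proof.
  intros h P0 H Hpoly _ Hin Hdis d [Hdiam _] s Hs.
  destruct (convex_polygon_convex_closed_bounded P0 Hpoly) as [Hc [Hcl Hb]].
  assert (Hadm : admissible P0 h H).
  { split; [auto|split; [auto|split; [auto|split; [|auto]]]].
    intros i Hi p Hp. apply pinterior_sub, (Hin i Hi p Hp). }
  destruct (escape_path_up_right P0 h H s Hadm Hs) as [t1 [Ht1 [Hx1 [Hy1 [g1 [Hg1 Hl1]]]]]].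
  destruct (escape_path_down_left P0 h H s Hadm Hs) as [t2 [Ht2 [Hx2 [Hy2 [g2 [Hg2 Hl2]]]]]].
  assert (Hd : dist t1 t2 <= d)
    by (apply Hdiam; exists t1, t2; split; [|split]; [eapply path_in_end; eauto ..|auto]).
  assert (Hl1norm := l1_le_twice_dist t1 t2).
  rewrite !Rabs_right in Hl1norm by lra.
  destruct (Rle_dec ((fst t1 - fst s) + (snd t1 - snd s)) d).
  - exists g1, t1. split; [auto|split; [auto|]].
    intros ts T1 T2. eapply Rle_trans; [apply Hl1|]; auto.
  - exists g2, t2. split; [auto|split; [auto|]].
    intros ts T1 T2. eapply Rle_trans; [apply Hl2|]; auto. lra.
Qed.
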